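(* Let $0<\lambda<1$ and let $I_1\subset\mathbb{R}$ be an open interval containing $[-1,1]$. For every integer $n\ge1$ there exists $\delta(n)>0$ with $(n+1)\delta(n)<1-\lambda$ such that for every $C^1$ map $h:I_1\to\mathbb{R}$ with $\|h-\mathrm{id}\|_{1,I_1}<\delta(n)$ and $h(0)>0$ there exists an integer $k\ge1$ satisfying $$(n+1)|h(\lambda^k)-\lambda^k|>\lambda^k(1-\lambda),\qquad n|h(\lambda^k)-\lambda^k|<\lambda^{k-1}(1-\lambda),$$ and $$|(h(y)-y)-(h(\lambda^k)-\lambda^k)|<\tfrac14|h(\lambda^k)-\lambda^k|\quad\text{for every } y\in I_1 \text{ with } |y-\lambda^k|<\lambda^{k-1}(1-\lambda).$$
   Context: For an open set $J\subset\mathbb{R}$ and a $C^1$ map $u$ on $J$, $\|u\|_{1,J}=\sup_{x\in J}(|u(x)|+|u'(x)|)$. *)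

From Stdlib Require Import Reals Lra.
Open Scope R_scope.

Definition is_open_interval (I : R -> Prop) : Prop :=
  (forall x y z, I x -> I z -> x <= y -> y <= z -> I y) /\
  (forall x, I x -> exists e, 0 < e /\ forall y, Rabs (y - x) < e -> I y).

Definition C1_on (I : R -> Prop) (u u' : R -> R) : Prop :=
  (forall x, I x -> derivable_pt_lim u x (u' x)) /\
  (forall x, I x -> continuity_pt u' x).

Definition C1_norm_lt (I : R -> Prop) (u u' : R -> R) (d : R) : Prop :=
  exists M, M < d /\ forall x, I x -> Rabs (u x) + Rabs (u' x) <= M.

(* Write g = h - id.  The C^1 hypothesis says that |g| and |g'| are bounded
   on I1 by some M < delta; by the mean value theorem g is then
   M-Lipschitz on I1, and 0 < g(0) <= M.  Put c = 1 - lam, Q = c/(n+1) and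
   p = M + Q >= g(0).  Since lam^k p -> 0 there is a first k >= 1 with
   lam^k p < g(0) <= lam^(k-1) p.  With t = lam^k and s = lam^(k-1) the
   Lipschitz bound gives  t Q < g(t) <= s (M (1 + lam) + Q),  and the choice
   delta = lam c / (4 n (n+1)) makes M so small that these two bounds yield
   the first two inequalities, while |g(y) - g(t)| <= M s c < g(t)/4 for
   |y - t| < s c gives the third. *)

From Stdlib Require Import Reals Lra Lia.
Open Scope R_scope.

Lemma lipschitz_of_bounded_derivative (I : R -> Prop) (g g' : R -> R) (M : R) :
  (forall x y z, I x -> I z -> x <= y -> y <= z -> I y) ->
  (forall x, I x -> derivable_pt_lim g x (g' x)) ->
  (forall x, I x -> Rabs (g' x) <= M) ->
  forall x y, I x -> I y -> Rabs (g y - g x) <= M * Rabs (y - x).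
Proof.
  intros Hconv Hder Hbound.
  assert (Hordered : forall x y, I x -> I y -> x < y ->
            Rabs (g y - g x) <= M * Rabs (y - x)).
  { intros x y Ix Iy Hxy.
    destruct (MVT_cor2 g g' x y Hxy) as [c [Hmvt Hc]].
    { intros c Hc. apply Hder, (Hconv x c y); tauto. }
    rewrite Hmvt, Rabs_mult.
    apply Rmult_le_compat_r; [apply Rabs_pos|].
    apply Hbound, (Hconv x c y); try tauto; lra. }
  intros x y Ix Iy.
  destruct (Rtotal_order x y) as [Hxy|[<-|Hyx]].
  - now apply Hordered.
  - rewrite !Rminus_diag, Rabs_R0. lra.
  - rewrite Rabs_minus_sym, (Rabs_minus_sym y x). now apply Hordered.
Qed.

Lemma C1_norm_lt_lipschitz (I : R -> Prop) (u u' : R -> R) (d : R) :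
  is_open_interval I ->
  (forall x, I x -> derivable_pt_lim u x (u' x)) ->
  C1_norm_lt I u u' d ->
  exists M, M < d /\ (forall x, I x -> Rabs (u x) <= M) /\
    (forall x y, I x -> I y -> Rabs (u y - u x) <= M * Rabs (y - x)).
Proof.
  intros [Hconv _] Hder [M [HMd Hnorm]].
  exists M. split; [exact HMd|]. split.
  - intros x Ix. pose proof (Rabs_pos (u' x)). specialize (Hnorm x Ix). lra.
  - apply (lipschitz_of_bounded_derivative I u u' M Hconv Hder).
    intros x Ix. pose proof (Rabs_pos (u x)). specialize (Hnorm x Ix). lra.
Qed.

Lemma geometric_bracket_below (lam p a : R) (N : nat) :
  (1 <= N)%nat -> a <= p -> lam ^ N * p < a ->
  exists k, (1 <= k)%nat /\ lam ^ k * p < a /\ a <= lam ^ (k - 1) * p.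
Proof.
  induction N as [|m IH]; intros HN Hap Hlow; [lia|].
  destruct (Nat.eq_dec m 0) as [->|Hm].
  - exists 1%nat. simpl. repeat split; [lia|lra|lra].
  - destruct (Rlt_dec (lam ^ m * p) a) as [Hm_low|Hm_high].
    + apply IH; [lia|exact Hap|exact Hm_low].
    + exists (S m). replace (S m - 1)%nat with m by lia.
      repeat split; [lia|exact Hlow|lra].
Qed.

Lemma geometric_bracket (lam p a : R) :
  0 < lam < 1 -> 0 < a -> a <= p ->
  exists k, (1 <= k)%nat /\ lam ^ k * p < a /\ a <= lam ^ (k - 1) * p.
Proof.
  intros Hlam Ha Hap.
  assert (Hratio : 0 < a / p) by (apply Rdiv_lt_0_compat; lra).
  destruct (pow_lt_1_zero lam ltac:(rewrite Rabs_right; lra) (a / p) Hratio)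
    as [N HN].
  apply (geometric_bracket_below lam p a (S N)); [lia|exact Hap|].
  specialize (HN (S N) ltac:(lia)).
  rewrite Rabs_right in HN by (apply Rle_ge, pow_le; lra).
  apply (Rmult_lt_compat_r p) in HN; [|lra].
  now replace (a / p * p) with a in HN by (field; lra).
Qed.

(* The two consequences of 4 M N (N+1) < lam (1-lam) that the estimates use:
   the upper bound on g(lam^k) stays below (1-lam)/N, and the oscillation of g
   on the window stays below a quarter of g(lam^k). *)
Lemma small_slope_bounds (lam N M : R) :
  0 < lam < 1 -> 1 <= N -> 0 <= M -> 4 * M * N * (N + 1) < lam * (1 - lam) ->
  N * M * (1 + lam) < (1 - lam) / (N + 1) /\ 4 * M * (N + 1) <= lam.
Proof.
  intros Hlam HN HM Hsmall. split.
  - apply (Rmult_lt_reg_r (N + 1)); [lra|].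
    replace ((1 - lam) / (N + 1) * (N + 1)) with (1 - lam) by (field; lra).
    assert (Hprod : 0 <= N * M * (N + 1))
      by (apply Rmult_le_pos; [apply Rmult_le_pos|]; lra).
    assert (N * M * (N + 1) * (1 + lam) <= N * M * (N + 1) * 2)
      by (apply Rmult_le_compat_l; lra).
    nra.
  - assert (0 <= 4 * M * (N + 1) * (N - 1))
      by (apply Rmult_le_pos; [apply Rmult_le_pos|]; lra).
    assert (4 * M * (N + 1) <= 4 * M * N * (N + 1)) by lra.
    assert (lam * (1 - lam) <= lam) by nra.
    lra.
Qed.

Lemma lipschitz_scale_selection (lam N M : R) (I : R -> Prop) (g : R -> R) :
  0 < lam < 1 -> 1 <= N -> 4 * M * N * (N + 1) < lam * (1 - lam) ->
  (forall x, 0 <= x <= 1 -> I x) ->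
  (forall x y, I x -> I y -> Rabs (g y - g x) <= M * Rabs (y - x)) ->
  0 < g 0 <= M ->
  exists k : nat, (1 <= k)%nat /\
    (N + 1) * Rabs (g (lam ^ k)) > lam ^ k * (1 - lam) /\
    N * Rabs (g (lam ^ k)) < lam ^ (k - 1) * (1 - lam) /\
    forall y, I y -> Rabs (y - lam ^ k) < lam ^ (k - 1) * (1 - lam) ->
      Rabs (g y - g (lam ^ k)) < / 4 * Rabs (g (lam ^ k)).
Proof.
  intros Hlam HN Hsmall HI Hlip Hg0.
  set (c := 1 - lam). set (Q := c / (N + 1)).
  assert (HQ : Q * (N + 1) = c) by (unfold Q; field; lra).
  assert (HQpos : 0 < Q) by (unfold Q, c; apply Rdiv_lt_0_compat; lra).
  destruct (small_slope_bounds lam N M Hlam HN ltac:(lra) Hsmall)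
    as [Hupper Hwindow].
  destruct (geometric_bracket lam (M + Q) (g 0) Hlam ltac:(lra) ltac:(lra))
    as [k [Hk [Hbelow Habove]]].
  exists k. split; [exact Hk|].
  set (s := lam ^ (k - 1)). set (t := lam ^ k).
  fold s in Habove. fold t in Hbelow.
  assert (Hts : t = lam * s).
  { unfold t, s. replace k with (S (k - 1)) at 1 by lia. reflexivity. }
  assert (Hs : 0 < s <= 1).
  { split; [apply pow_lt; lra|].
    rewrite <- (pow1 (k - 1)). apply pow_incr. lra. }
  assert (It : I t) by (apply HI; nra).
  assert (Hgt : Rabs (g t - g 0) <= M * t).
  { pose proof (Hlip 0 t (HI 0 ltac:(lra)) It) as H0t.
    now rewrite Rminus_0_r, (Rabs_right t) in H0t by nra. }
  assert (Hgt_between : g 0 - M * t <= g t <= g 0 + M * t).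
  { pose proof (Rle_abs (g t - g 0)). pose proof (Rle_abs (- (g t - g 0))).
    rewrite Rabs_Ropp in *. lra. }
  assert (Hlow : t * Q < g t) by nra.
  assert (Habs : Rabs (g t) = g t) by (apply Rabs_right; nra).
  rewrite Habs.
  split; [nra|]. split.
  - fold c Q in Hupper.
    assert (Hhigh : g t <= s * (M * (1 + lam) + Q)) by nra.
    assert (N * g t <= N * (s * (M * (1 + lam) + Q)))
      by (apply Rmult_le_compat_l; lra).
    assert (s * (N * M * (1 + lam)) < s * Q)
      by (apply Rmult_lt_compat_l; lra).
    replace c with (Q * (N + 1)). nra.
  - intros y Iy Hy.
    assert (Hosc : Rabs (g y - g t) <= M * (s * c)).
    { apply (Rle_trans _ (M * Rabs (y - t))); [now apply Hlip|].
      apply Rmult_le_compat_l; lra. }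
    assert (4 * (M * (s * c)) * (N + 1) <= t * Q * (N + 1)).
    { replace (t * Q * (N + 1)) with (lam * (s * c)) by (rewrite Hts, <- HQ; ring).
      replace (4 * (M * (s * c)) * (N + 1)) with (4 * M * (N + 1) * (s * c)) by ring.
      apply Rmult_le_compat_r; [unfold c; nra|exact Hwindow]. }
    nra.
Qed.

Theorem lemma3p12 :
  forall (lam : R), 0 < lam < 1 ->
  forall (I1 : R -> Prop), is_open_interval I1 ->
  (forall x, -1 <= x <= 1 -> I1 x) ->
  forall (n : nat), (1 <= n)%nat ->
  exists delta : R, 0 < delta /\ (INR n + 1) * delta < 1 - lam /\
    forall h h' : R -> R,
      C1_on I1 h h' ->
      C1_norm_lt I1 (fun x => h x - x) (fun x => h' x - 1) delta ->
      h 0 > 0 ->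
      exists k : nat, (1 <= k)%nat /\
        (INR n + 1) * Rabs (h (lam ^ k) - lam ^ k) > lam ^ k * (1 - lam) /\
        INR n * Rabs (h (lam ^ k) - lam ^ k) < lam ^ (k - 1) * (1 - lam) /\
        forall y, I1 y -> Rabs (y - lam ^ k) < lam ^ (k - 1) * (1 - lam) ->
          Rabs ((h y - y) - (h (lam ^ k) - lam ^ k))
            < / 4 * Rabs (h (lam ^ k) - lam ^ k).
Proof.
  intros lam Hlam I1 HI H01 n Hn.
  set (N := INR n).
  assert (HN : 1 <= N) by exact (le_INR 1 n Hn).
  set (D := 4 * N * (N + 1)).
  assert (HD : 0 < D) by (unfold D; nra).
  exists (lam * (1 - lam) / D).
  set (delta := lam * (1 - lam) / D).
  assert (Hdelta : delta * D = lam * (1 - lam)) by (unfold delta; field; lra).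
  split; [apply Rdiv_lt_0_compat; nra|]. split.
  { apply (Rmult_lt_reg_r (4 * N)); [lra|].
    replace ((N + 1) * delta * (4 * N)) with (delta * D) by (unfold D; ring).
    rewrite Hdelta. nra. }
  intros h h' [Hder _] Hnorm Hh0.
  assert (Hgder : forall x, I1 x -> derivable_pt_lim (fun x => h x - x) x (h' x - 1)).
  { intros x Ix. apply (derivable_pt_lim_minus h id), derivable_pt_lim_id.
    now apply Hder. }
  destruct (C1_norm_lt_lipschitz I1 _ _ _ HI Hgder Hnorm) as [M [HMd [Hsup Hlip]]].
  assert (Hg0 : 0 < h 0 - 0 <= M).
  { specialize (Hsup 0 (H01 0 ltac:(lra))).
    rewrite Rabs_right in Hsup; lra. }
  apply (lipschitz_scale_selection lam N M I1 (fun x => h x - x)); try assumption.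
  - replace (4 * M * N * (N + 1)) with (M * D) by (unfold D; ring).
    rewrite <- Hdelta. now apply Rmult_lt_compat_r.
  - intros x Hx. apply H01. lra.
Qed.
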